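(* Let $(R,\mathfrak{m})$ be a local ring and $\mathcal{X}$ a resolving subcategory of $\operatorname{mod} R$. If $\operatorname{radius}\mathcal{X}<\infty$, then $\sup_{X\in\mathcal{X}}\{\ell\ell(\Gamma_\mathfrak{m}(X))\}<\infty$.
   Context: All modules are finitely generated; $\operatorname{mod} R$ is the category of finitely generated $R$-modules; subcategories are full and closed under isomorphism. A subcategory is resolving if it contains the projective modules and is closed under direct summands, extensions, and kernels of epimorphisms. $\Gamma_\mathfrak{m}(X)$ is the submodule of elements of $X$ annihilated by some power of $\mathfrak{m}$; $\ell\ell(N)$ (Loewy length) is the infimum of $n\ge0$ with $\mathfrak{m}^nN=0$. Radius: $\Omega^iX$ is the $i$-th syzygy in the minimal free resolution, $\Omega^0X=X$; $[\mathcal{X}]$ is the additive closure (direct summands of finite direct sums) of the subcategory consisting of $R$ and all $\Omega^iX$, $i\ge0$, $X\in\mathcal{X}$; $\mathcal{X}\circ\mathcal{Y}$ consists of modules $M$ with an exact sequence $0\to X\to M\to Y\to0$, $X\in\mathcal{X}$, $Y\in\mathcal{Y}$; $[C]_1=[C]$, $[C]_r=[[C]_{r-1}\circ[C]]$; the radius of $\mathcal{X}$ is the infimum of $n\ge0$ with $\mathcal{X}\subseteq[C]_{n+1}$ for some $C\in\operatorname{mod} R$. *)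

From HB Require Import structures.
From mathcomp Require Import all_boot all_order all_algebra.
Set Implicit Arguments. Unset Strict Implicit. Unset Printing Implicit Defensive.
Import GRing.Theory.
Local Open Scope ring_scope.

Definition is_ideal (R : comUnitRingType) (I : R -> Prop) : Prop :=
  I 0 /\ (forall x y, I x -> I y -> I (x + y)) /\ (forall r x, I x -> I (r * x)).

Definition fg_ideal (R : comUnitRingType) (I : R -> Prop) : Prop :=
  exists s : seq R, forall x, I x <->
    exists c : 'I_(size s) -> R, x = \sum_(j < size s) c j * s`_j.

Definition noetherian (R : comUnitRingType) : Prop :=
  forall I : R -> Prop, is_ideal I -> fg_ideal I.

(* local ring: the non-units form an ideal (the unique maximal ideal m) *)
Definition local_ring (R : comUnitRingType) : Prop :=
  forall x y : R, x \isn't a GRing.unit -> y \isn't a GRing.unit ->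
    (x + y) \isn't a GRing.unit.

Definition maxideal (R : comUnitRingType) (x : R) : Prop := x \isn't a GRing.unit.

Definition mpow (R : comUnitRingType) (k : nat) (r : R) : Prop :=
  exists (l : nat) (c : 'I_l -> R) (a : 'I_l -> 'I_k -> R),
    (forall i j, maxideal (a i j)) /\ r = \sum_(i < l) c i * \prod_(j < k) a i j.

Definition lin (R : comUnitRingType) (M N : lmodType R) (f : M -> N) : Prop :=
  forall (a : R) (x y : M), f (a *: x + y) = a *: f x + f y.

Definition surj (A B : Type) (f : A -> B) : Prop := forall y, exists x, f x = y.

Definition fgmod (R : comUnitRingType) (M : lmodType R) : Prop :=
  exists (n : nat) (p : 'rV[R]_n -> M), lin p /\ surj p.

Definition mingens (R : comUnitRingType) (M : lmodType R) (n : nat) : Prop :=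
  (exists p : 'rV[R]_n -> M, lin p /\ surj p) /\
  (forall m, (exists p : 'rV[R]_m -> M, lin p /\ surj p) -> (n <= m)%N).

Definition isomod (R : comUnitRingType) (M N : lmodType R) : Prop :=
  exists f : M -> N, lin f /\ bijective f.

Definition summand (R : comUnitRingType) (N M : lmodType R) : Prop :=
  exists (s : N -> M) (r : M -> N), lin s /\ lin r /\ cancel s r.

Definition ses (R : comUnitRingType) (A B C : lmodType R) : Prop :=
  exists (i : A -> B) (p : B -> C), lin i /\ lin p /\ injective i /\ surj p /\
    (forall y, p y = 0 <-> exists x, i x = y).

Definition projmod (R : comUnitRingType) (P : lmodType R) : Prop :=
  fgmod P /\ exists n, summand P 'rV[R]_n.

Definition subcat (R : comUnitRingType) (X : lmodType R -> Prop) : Prop :=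
  (forall M, X M -> fgmod M) /\ (forall M N, isomod M N -> X M -> X N).

Definition resolving (R : comUnitRingType) (X : lmodType R -> Prop) : Prop :=
  subcat X /\
  (forall P, projmod P -> X P) /\
  (forall M N, X M -> summand N M -> X N) /\
  (forall A B C, ses A B C -> X A -> X C -> X B) /\
  (forall A B C, ses A B C -> X B -> X C -> X A).

(* N is (isomorphic to) the first syzygy of M in its minimal free resolution:
   0 -> N -> R^(mu M) -> M -> 0 *)
Definition syz (R : comUnitRingType) (M N : lmodType R) : Prop :=
  exists n, mingens M n /\ ses N 'rV[R]_n M.

Fixpoint syzN (R : comUnitRingType) (k : nat) (M N : lmodType R) {struct k} : Prop :=
  match k with
  | 0 => isomod M N
  | k'.+1 => exists K : lmodType R, syzN k' M K /\ syz K N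
  end.

(* M is a direct summand of a finite direct sum of modules satisfying G
   (biproduct written out via its structure maps) *)
Definition addcl (R : comUnitRingType) (G : lmodType R -> Prop) (M : lmodType R) : Prop :=
  fgmod M /\
  exists (k : nat) (Y : 'I_k -> lmodType R)
         (s : forall j, M -> Y j) (r : forall j, Y j -> M),
    (forall j, G (Y j) /\ lin (s j) /\ lin (r j)) /\
    (forall x : M, \sum_(j < k) r j (s j x) = x).

(* [X]: additive closure of R and all Omega^i Z, Z in X *)
Definition brk (R : comUnitRingType) (X : lmodType R -> Prop) : lmodType R -> Prop :=
  addcl (fun Y => isomod Y 'rV[R]_1 \/ exists (Z : lmodType R) (i : nat), X Z /\ syzN i Z Y).

Definition circ (R : comUnitRingType) (X Y : lmodType R -> Prop) (M : lmodType R) : Prop :=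
  exists A B : lmodType R, X A /\ Y B /\ ses A M B.

Definition brk1 (R : comUnitRingType) (C : lmodType R) : lmodType R -> Prop :=
  brk (fun Z => isomod C Z).

(* ballS C r = [C]_(r+1) *)
Fixpoint ballS (R : comUnitRingType) (C : lmodType R) (r : nat) {struct r} : lmodType R -> Prop :=
  match r with
  | 0 => brk1 C
  | r'.+1 => brk (circ (ballS C r') (brk1 C))
  end.

Definition radius_finite (R : comUnitRingType) (X : lmodType R -> Prop) : Prop :=
  exists (n : nat) (C : lmodType R), fgmod C /\ forall M, X M -> ballS C n M.

(* ll(Gamma_m(M)) <= n, i.e. m^n Gamma_m(M) = 0 *)
Definition ll_gamma_le (R : comUnitRingType) (M : lmodType R) (n : nat) : Prop :=
  forall x : M, (exists k, forall r, mpow k r -> r *: x = 0) ->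
    forall r, mpow n r -> r *: x = 0.

From Stdlib Require Import IndefiniteDescription.
From HB Require Import structures.
From mathcomp Require Import all_boot all_order all_algebra.
Set Implicit Arguments. Unset Strict Implicit. Unset Printing Implicit Defensive.
Import GRing.Theory.
Local Open Scope ring_scope.

(* Over a Noetherian ring, Gamma_m(M) is a finitely generated submodule of a
   finitely generated module M, hence killed by a single power of m; so every
   finitely generated module has finite ll(Gamma_m).  This invariant does not
   increase along injections, is at most the maximum over the summands of a
   direct sum, and is subadditive on short exact sequences.  Syzygies embed in
   free modules, so they are all bounded by ll(Gamma_m(R)).  By induction on r
   every module of [C]_(r+1) is then bounded in terms of C and R alone. *)

Section LinearMaps.
Variables (R : comUnitRingType) (M N : lmodType R) (f : M -> N).
Hypothesis f_lin : lin f.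

Lemma lin0 : f 0 = 0.
Proof.
have := f_lin 1 0 0; rewrite !scale1r !addr0 => f00.
by apply: (@addrI _ (f 0)); rewrite addr0 -f00.
Qed.

Lemma linZ a x : f (a *: x) = a *: f x.
Proof. by have := f_lin a x 0; rewrite lin0 !addr0. Qed.

Lemma linD x y : f (x + y) = f x + f y.
Proof. by have := f_lin 1 x y; rewrite !scale1r. Qed.

Lemma lin_sum k (c : 'I_k -> R) (v : 'I_k -> M) :
  f (\sum_(j < k) c j *: v j) = \sum_(j < k) c j *: f (v j).
Proof.
apply: (big_rec2 (fun u w => f u = w)); first exact: lin0.
by move=> i y1 y2 _ <-; rewrite f_lin.
Qed.

Lemma lin_can g : cancel f g -> cancel g f -> lin g.
Proof. by move=> fK gK a x y; apply: (can_inj fK); rewrite f_lin !gK. Qed.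

End LinearMaps.

Section PowersOfMaxideal.
Variable R : comUnitRingType.

Lemma mpow_mull k (s r : R) : mpow k r -> mpow k (s * r).
Proof.
case=> l [c [a [am ->]]]; exists l, (fun i => s * c i), a; split => //.
by rewrite mulr_sumr; apply: eq_bigr => i _; rewrite mulrA.
Qed.

Lemma mpowS k (r : R) : mpow k.+1 r -> mpow k r.
Proof.
case=> l [c [a [am ->]]].
exists l, (fun i => c i * a i ord_max), (fun i j => a i (widen_ord (leqnSn k) j)).
split => //; apply: eq_bigr => i _.
by rewrite big_ord_recr /= mulrA [c i * _ * _]mulrAC.
Qed.

Lemma mpow_le k n (r : R) : (k <= n)%N -> mpow n r -> mpow k r.
Proof. by move=> /subnK <-; elim: (n - k)%N => //= d IH /mpowS. Qed.

Lemma mpowD_sum_mul a b (t : R) : mpow (a + b) t ->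
  exists l (w v : 'I_l -> R), (forall i, mpow a (w i)) /\ (forall i, mpow b (v i))
    /\ t = \sum_(i < l) w i * v i.
Proof.
case=> l [c [x [xm ->]]].
exists l, (fun i => c i * \prod_(j < a) x i (lshift b j)),
  (fun i => \prod_(j < b) x i (rshift a j)); split; [|split].
- move=> i; exists 1%N, (fun _ => c i), (fun _ j => x i (lshift b j)).
  by rewrite big_ord1.
- move=> i; exists 1%N, (fun _ => 1), (fun _ j => x i (rshift a j)).
  by rewrite big_ord1 mul1r.
- by apply: eq_bigr => i _; rewrite big_split_ord /= mulrA.
Qed.

End PowersOfMaxideal.

Definition submodule (R : comUnitRingType) (M : lmodType R) (S : M -> Prop) :=
  S 0 /\ forall a x y, S x -> S y -> S (a *: x + y).

Definition fg_submodule (R : comUnitRingType) (M : lmodType R) (S : M -> Prop) :=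
  exists k (gen : 'I_k -> M), (forall j, S (gen j)) /\
    forall x, S x -> exists c : 'I_k -> R, x = \sum_(j < k) c j *: gen j.

Definition noetherian_mod (R : comUnitRingType) (M : lmodType R) :=
  forall S : M -> Prop, submodule S -> fg_submodule S.

Section NoetherianModules.
Variable R : comUnitRingType.

Lemma submodule_sum (M : lmodType R) (S : M -> Prop) k (c : 'I_k -> R) (v : 'I_k -> M) :
  submodule S -> (forall j, S (v j)) -> S (\sum_(j < k) c j *: v j).
Proof.
case=> S0 SD Sv; apply: (big_ind S) => //.
- by move=> x y Sx Sy; rewrite -[x]scale1r; apply: SD.
- by move=> i _; rewrite -[_ *: _]addr0; apply: SD.
Qed.

Lemma noetherian_regular : noetherian R -> noetherian_mod R^o.
Proof.
move=> noethR S [S0 SD].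
have S_ideal : is_ideal (S : R -> Prop).
  split => //; split.
  - by move=> x y Sx Sy; have := SD 1 x y Sx Sy; rewrite scale1r.
  - by move=> r x Sx; have := SD r x 0 Sx S0; rewrite addr0.
have [s gen_s] := noethR _ S_ideal.
exists (size s), (fun j => s`_j); split; last by move=> x /gen_s.
move=> j; apply/gen_s; exists (fun i => (i == j)%:R).
rewrite (bigD1 j) //= eqxx mul1r big1 ?addr0 // => i /negbTE ->.
by rewrite mul0r.
Qed.

Section Extension.
Variables (A B C : lmodType R) (g : A -> B) (f : B -> C).
Hypotheses (g_lin : lin g) (f_lin : lin f).
Hypothesis ker_f : forall y, f y = 0 -> exists x, g x = y.

(* Generators of S are lifts of generators of f(S) together with images of
   generators of g^-1(S). *)
Lemma noetherian_mod_ext : noetherian_mod A -> noetherian_mod C -> noetherian_mod B.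
Proof.
move=> noethA noethC S [S0 SD].
have [kC [genC [genC_img genC_span]]] : fg_submodule (fun c => exists b, S b /\ f b = c).
  apply: noethC; split; first by exists 0; rewrite lin0.
  move=> a _ _ [bx [Sx <-]] [by_ [Sy <-]].
  by exists (a *: bx + by_); split; [apply: SD | rewrite f_lin].
have [kA [genA [genA_pre genA_span]]] : fg_submodule (fun a => S (g a)).
  apply: noethA; split; first by rewrite lin0.
  by move=> a x y Sx Sy; rewrite g_lin; apply: SD.
have [lift lift_spec] := functional_choice _ genC_img.
pose gen i := match split i with inl j => lift j | inr j => g (genA j) end.
exists (kC + kA)%N, gen; split.
  by move=> i; rewrite /gen; case: (split i) => j; [case: (lift_spec j) | apply: genA_pre].
move=> x Sx.
have [cC fxE] := genC_span (f x) (ex_intro _ x (conj Sx erefl)).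
set x' := x - \sum_(j < kC) cC j *: lift j.
have Sx' : S x'.
  rewrite /x' addrC -scaleN1r; apply: (SD) => //.
  by apply: submodule_sum => [|j]; [exact: (conj S0 SD) | case: (lift_spec j)].
have fx' : f x' = 0.
  rewrite /x' -scaleN1r addrC linD // linZ // lin_sum // fxE scaleN1r addrC.
  apply/eqP; rewrite subr_eq0; apply/eqP.
  by apply: eq_bigr => j _; case: (lift_spec j) => _ ->.
have [a ga] := ker_f fx'.
have [cA gaE] : exists c : 'I_kA -> R, a = \sum_(j < kA) c j *: genA j.
  by apply: genA_span; rewrite ga.
exists (fun i => match split i with inl j => cC j | inr j => cA j end).
rewrite big_split_ord /= /gen.
have -> : x = \sum_(j < kC) cC j *: lift j + x' by rewrite /x' addrC subrK.
congr (_ + _).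
  by apply: eq_bigr => j _; rewrite -[lshift _ _]/(unsplit (inl j)) unsplitK.
rewrite -ga gaE lin_sum //.
by apply: eq_bigr => j _; rewrite -[rshift _ _]/(unsplit (inr j)) unsplitK.
Qed.

End Extension.

Lemma noetherian_rV n : noetherian R -> noetherian_mod 'rV[R]_n.
Proof.
move=> noethR; elim: n => [|n IH].
  move=> S _; exists 0%N, (fun _ => 0); split; first by case.
  by move=> x _; exists (fun _ => 0); rewrite big_ord0 thinmx0.
apply: (@noetherian_mod_ext R^o _ _ (fun a : R^o => a *: delta_mx 0 0)
   (fun v : 'rV[R]_n.+1 => \row_j v 0 (lift ord0 j))).
- by move=> a x y; rewrite /= scalerDl scalerA.
- by move=> a x y; apply/rowP => j; rewrite !mxE.
- move=> v /rowP v_tail; exists (v 0 0); apply/rowP => j; rewrite !mxE.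
  case: (unliftP ord0 j) => [j' ->|->]; last by rewrite eqxx mulr1.
  by have := v_tail j'; rewrite !mxE => ->; rewrite mulr0.
- exact: noetherian_regular.
- exact: IH.
Qed.

End NoetherianModules.

Definition gamma_m (R : comUnitRingType) (M : lmodType R) (x : M) :=
  exists k, forall r, mpow k r -> r *: x = 0.

Definition ll_gamma_bounded (R : comUnitRingType) (G : lmodType R -> Prop) b :=
  forall M, G M -> ll_gamma_le M b.

Section LoewyLengthOfGamma.
Variable R : comUnitRingType.

Lemma ll_gamma_le_mono (M : lmodType R) b b' :
  (b <= b')%N -> ll_gamma_le M b -> ll_gamma_le M b'.
Proof. by move=> le_bb' llM x gx r /(mpow_le le_bb'); apply: llM. Qed.

Lemma gamma_m_lin (M N : lmodType R) (f : M -> N) x :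
  lin f -> gamma_m x -> gamma_m (f x).
Proof. by move=> f_lin [k kx]; exists k => r mr; rewrite -linZ // kx // lin0. Qed.

Lemma gamma_m_submodule (M : lmodType R) : submodule (@gamma_m R M).
Proof.
split; first by exists 0%N => r _; rewrite scaler0.
move=> a x y [kx kx0] [ky ky0]; exists (kx + ky)%N => r mr.
rewrite scalerDr scalerA mulrC -scalerA kx0 ?scaler0 ?add0r.
  by apply: ky0; apply: mpow_le mr; apply: leq_addl.
by apply: mpow_le mr; apply: leq_addr.
Qed.

(* A bound is the largest annihilating exponent of finitely many generators
   of the preimage of Gamma_m(M). *)
Lemma ll_gamma_le_quotient (N M : lmodType R) (p : N -> M) :
  lin p -> surj p -> noetherian_mod N -> exists b, ll_gamma_le M b.
Proof.
move=> p_lin p_surj noethN.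
have [k [gen [gen_gamma gen_span]]] : fg_submodule (fun y => gamma_m (p y)).
  apply: noethN; split; first by rewrite lin0 //; case: (gamma_m_submodule M).
  move=> a x y gx gy; rewrite p_lin.
  by have [_ gammaD] := gamma_m_submodule M; apply: gammaD.
have [kj kj0] := functional_choice _ gen_gamma.
exists (\max_(j < k) kj j) => x gx r mr.
have [y yx] := p_surj x; subst x.
have [c ->] := gen_span y gx.
rewrite lin_sum // scaler_sumr big1 // => j _.
rewrite scalerA mulrC -scalerA kj0 ?scaler0 //.
by apply: mpow_le mr; apply: leq_bigmax.
Qed.

Lemma ll_gamma_le_fgmod (M : lmodType R) :
  noetherian R -> fgmod M -> exists b, ll_gamma_le M b.
Proof.
move=> noethR [n [p [p_lin p_surj]]].
exact: ll_gamma_le_quotient p_lin p_surj (noetherian_rV noethR).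
Qed.

Lemma ll_gamma_le_regular : noetherian R -> exists b, ll_gamma_le R^o b.
Proof.
move=> noethR; apply: (@ll_gamma_le_quotient _ _ id) => //.
  by move=> y; exists y.
exact: noetherian_regular.
Qed.

Lemma ll_gamma_le_inj (M N : lmodType R) (f : M -> N) b :
  lin f -> injective f -> ll_gamma_le N b -> ll_gamma_le M b.
Proof.
move=> f_lin f_inj llN x gx r mr; apply: f_inj.
by rewrite lin0 // linZ // (llN _ (gamma_m_lin f_lin gx)).
Qed.

Lemma ll_gamma_le_iso (M N : lmodType R) b :
  isomod M N -> ll_gamma_le M b -> ll_gamma_le N b.
Proof.
case=> f [f_lin [g fK gK]]; apply: (ll_gamma_le_inj (lin_can f_lin fK gK)).
exact: can_inj gK.
Qed.

Lemma ll_gamma_le_rV n b : ll_gamma_le R^o b -> ll_gamma_le 'rV[R]_n b.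
Proof.
move=> llR x [k kx] r mr; apply/rowP => j; rewrite !mxE.
apply: (llR (x 0 j)) mr; exists k => s ms.
by have := congr1 (fun v : 'rV[R]_n => v 0 j) (kx s ms); rewrite !mxE.
Qed.

Lemma syzN_embeds_free k (Z Y : lmodType R) : syzN k.+1 Z Y ->
  exists n (i : Y -> 'rV[R]_n), lin i /\ injective i.
Proof. by case=> K [_ [n [_ [i [p [i_lin [_ [i_inj _]]]]]]]]; exists n, i. Qed.

Lemma ll_gamma_bounded_addcl (G : lmodType R -> Prop) b :
  ll_gamma_bounded G b -> ll_gamma_bounded (addcl G) b.
Proof.
move=> llG M [_ [k [Y [s [r [summands sum_rs]]]]]] x gx t mt.
rewrite -(sum_rs x) scaler_sumr big1 // => j _.
have [GY [s_lin r_lin]] := summands j.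
by rewrite -linZ // (llG _ GY _ (gamma_m_lin s_lin gx)) // lin0.
Qed.

(* For t = sum w_i v_i with w_i in m^b1, v_i in m^b2: v_i x lies in
   Gamma_m(A), which is killed by w_i. *)
Lemma ll_gamma_bounded_circ (G1 G2 : lmodType R -> Prop) b1 b2 :
  ll_gamma_bounded G1 b1 -> ll_gamma_bounded G2 b2 ->
  ll_gamma_bounded (circ G1 G2) (b1 + b2).
Proof.
move=> llG1 llG2 M [A [B [G1A [G2B [i [p [i_lin [p_lin [i_inj [_ ker_p]]]]]]]]]] x gx t mt.
have [l [w [v [mw [mv ->]]]]] := mpowD_sum_mul mt.
rewrite scaler_suml big1 // => j _.
have [a ia] : exists a, i a = v j *: x.
  by apply/ker_p; rewrite linZ // (llG2 _ G2B _ (gamma_m_lin p_lin gx) _ (mv j)).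
have ga : gamma_m a.
  have [k kx] := gx; exists k => s ms; apply: i_inj.
  by rewrite linZ // ia lin0 // scalerA kx // mulrC; apply: mpow_mull.
by rewrite -scalerA -ia -linZ // (llG1 _ G1A _ ga _ (mw j)) lin0.
Qed.

Lemma ll_gamma_bounded_brk (G : lmodType R -> Prop) b bR : ll_gamma_le R^o bR ->
  ll_gamma_bounded G b -> ll_gamma_bounded (brk G) (maxn b bR).
Proof.
move=> llR llG; apply: ll_gamma_bounded_addcl => Y [[f [f_lin [g fK _]]]|[Z [[|k] [GZ syzZ]]]].
- apply: ll_gamma_le_mono (leq_maxr _ _) _.
  exact: ll_gamma_le_inj f_lin (can_inj fK) (ll_gamma_le_rV llR).
- exact: ll_gamma_le_mono (leq_maxl _ _) (ll_gamma_le_iso syzZ (llG _ GZ)).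
- have [n [i [i_lin i_inj]]] := syzN_embeds_free syzZ.
  apply: ll_gamma_le_mono (leq_maxr _ _) _.
  exact: ll_gamma_le_inj i_lin i_inj (ll_gamma_le_rV llR).
Qed.

Lemma ll_gamma_bounded_ballS (C : lmodType R) r :
  noetherian R -> fgmod C -> exists b, ll_gamma_bounded (ballS C r) b.
Proof.
move=> noethR fgC.
have [bR llR] := ll_gamma_le_regular noethR.
have [bC llC] := ll_gamma_le_fgmod noethR fgC.
have llC1 : ll_gamma_bounded (brk1 C) (maxn bC bR).
  by apply: ll_gamma_bounded_brk => // Y CY; apply: ll_gamma_le_iso CY llC.
elim: r => [|r [b llr]]; first by exists (maxn bC bR).
exists (maxn (b + maxn bC bR) bR).
exact: ll_gamma_bounded_brk llR (ll_gamma_bounded_circ llr llC1).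
Qed.

End LoewyLengthOfGamma.

Theorem proposition4p3 (R : comUnitRingType) (hN : noetherian R) (hL : local_ring R)
  (X : lmodType R -> Prop) (hX : resolving X) (hrad : radius_finite X) :
  exists n : nat, forall M : lmodType R, X M -> ll_gamma_le M n.
Proof.
have [r [C [fgC XC]]] := hrad.
have [b llb] := ll_gamma_bounded_ballS r hN fgC.
by exists b => M /XC; apply: llb.
Qed.
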